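(* $$\sum_{i,j,k\ge0}\frac{q^{i^2+j^2+k^2}}{(q)_{i+j-k}(q)_{i+k-j}(q)_{j+k-i}}=\sum_{i,j\ge0}\frac{q^{i^2+j^2+(i-j)^2}}{(q)_{2i}(q)_{2j}}.$$
   Context: $q$ is complex with $|q|<1$. $(q)_n=\prod_{j=1}^n(1-q^j)$ for $n\ge0$ and $1/(q)_n:=0$ for $n<0$. *)

From Stdlib Require Import Reals ZArith.
Open Scope R_scope.

Record Cplx := mkC { Re : R ; Im : R }.

Definition C0 : Cplx := mkC 0 0.
Definition C1 : Cplx := mkC 1 0.
Definition Cadd (z w : Cplx) : Cplx := mkC (Re z + Re w) (Im z + Im w).
Definition Copp (z : Cplx) : Cplx := mkC (- Re z) (- Im z).
Definition Csub (z w : Cplx) : Cplx := Cadd z (Copp w).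
Definition Cmul (z w : Cplx) : Cplx :=
  mkC (Re z * Re w - Im z * Im w) (Re z * Im w + Im z * Re w).
Definition Cinv (z : Cplx) : Cplx :=
  mkC (Re z / (Re z ^ 2 + Im z ^ 2)) (- Im z / (Re z ^ 2 + Im z ^ 2)).
Definition Cdiv (z w : Cplx) : Cplx := Cmul z (Cinv w).
Definition Cnorm (z : Cplx) : R := sqrt (Re z ^ 2 + Im z ^ 2).

Fixpoint Cpow (z : Cplx) (n : nat) : Cplx :=
  match n with O => C1 | S m => Cmul (Cpow z m) z end.

(* finite sum  f 0 + ... + f n  (n+1 terms) *)
Fixpoint Csum (f : nat -> Cplx) (n : nat) : Cplx :=
  match n with O => f O | S m => Cadd (Csum f m) (f (S m)) end.

Fixpoint qpoch (q : Cplx) (n : nat) : Cplx :=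
  match n with O => C1 | S m => Cmul (qpoch q m) (Csub C1 (Cpow q (S m))) end.

(* 1/(q)_n for integer n, with 1/(q)_n := 0 for n < 0 *)
Definition invqpoch (q : Cplx) (n : Z) : Cplx :=
  if (n <? 0)%Z then C0 else Cinv (qpoch q (Z.to_nat n)).

Definition Ccv (u : nat -> Cplx) (l : Cplx) : Prop :=
  forall eps : R, eps > 0 -> exists N : nat, forall n : nat, (n >= N)%nat ->
    Cnorm (Csub (u n) l) < eps.

Definition lhs_term (q : Cplx) (i j k : nat) : Cplx :=
  Cmul (Cpow q (i*i + j*j + k*k))
   (Cmul (invqpoch q (Z.of_nat i + Z.of_nat j - Z.of_nat k))
    (Cmul (invqpoch q (Z.of_nat i + Z.of_nat k - Z.of_nat j))
          (invqpoch q (Z.of_nat j + Z.of_nat k - Z.of_nat i)))).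

Definition rhs_term (q : Cplx) (i j : nat) : Cplx :=
  Cmul (Cpow q (i*i + j*j + Z.abs_nat (Z.of_nat i - Z.of_nat j) ^ 2))
   (Cmul (invqpoch q (Z.of_nat (2*i))) (invqpoch q (Z.of_nat (2*j)))).

Definition lhs_partial (q : Cplx) (N : nat) : Cplx :=
  Csum (fun i => Csum (fun j => Csum (fun k => lhs_term q i j k) N) N) N.
Definition rhs_partial (q : Cplx) (N : nat) : Cplx :=
  Csum (fun i => Csum (fun j => rhs_term q i j) N) N.

Definition lhs_abs_partial (q : Cplx) (N : nat) : R :=
  sum_f_R0 (fun i => sum_f_R0 (fun j => sum_f_R0 (fun k => Cnorm (lhs_term q i j k)) N) N) N.
Definition rhs_abs_partial (q : Cplx) (N : nat) : R :=
  sum_f_R0 (fun i => sum_f_R0 (fun j => Cnorm (rhs_term q i j)) N) N.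

From Pilot Require Import Defs.
From Stdlib Require Import Reals ZArith Lra Lia Field.
(* [Reals] also exports a constant [C1]; re-import [Defs] so that [C1] is the complex unit. *)
Import Defs.
Open Scope R_scope.

(* The triple sum and the double sum have the same inner structure: for fixed
   i >= j the k-sum of the left-hand side is finite (the summand vanishes unless
   i - j <= k <= i + j), and after the substitution k = (i - j) + r it becomes
   the terminating q-series identity

     sum_{r=0}^{L} q^(r^2 + a r) / ((q)_r (q)_(L-r) (q)_(a+r)) = 1 / ((q)_L (q)_(L+a))

   with L = 2j, a = 2(i - j), which is proved by induction on L from the
   q-Pascal recurrence of 1/(q)_n.  Hence the k-sum of the left summand equals
   the (i,j) summand of the right-hand side as soon as k runs up to i + j.
   For the analysis, |1/(q)_n| is bounded uniformly in n (by exp(1/(1-|q|)^2)),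
   so both summands are dominated by a geometric series in i + j (+ k): this
   gives the absolute bounds, the Cauchy property of the square partial sums of
   the right-hand side, and an estimate O(|q|^N) for the difference of the two
   partial sums at level N, which transfers the limit to the left-hand side. *)

Lemma Cplx_eq (a b c d : R) : a = c -> b = d -> mkC a b = mkC c d.
Proof. intros; subst; reflexivity. Qed.

Lemma Cring : ring_theory C0 C1 Cadd Cmul Csub Copp (@eq Cplx).
Proof.
  split; intros; repeat match goal with z : Cplx |- _ => destruct z end;
  unfold Csub, Cadd, Cmul, Copp, C0, C1; cbn; apply Cplx_eq; ring.
Qed.

Lemma C1_neq_C0 : C1 <> C0.
Proof. unfold C1, C0; intro H; injection H; lra. Qed.

Lemma Cinv_l (z : Cplx) : z <> C0 -> Cmul (Cinv z) z = C1.
Proof.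
  destruct z as [a b]; intro Hz; unfold Cinv, Cmul, C1; cbn.
  assert (Hn : a ^ 2 + b ^ 2 <> 0).
  { intro E; apply Hz; unfold C0.
    assert (a = 0) by nra; assert (b = 0) by nra; subst; reflexivity. }
  apply Cplx_eq; field; contradict Hn; lra.
Qed.

Lemma Cfield : field_theory C0 C1 Cadd Cmul Csub Copp Cdiv Cinv (@eq Cplx).
Proof.
  split.
  - exact Cring.
  - exact C1_neq_C0.
  - reflexivity.
  - exact Cinv_l.
Qed.

Add Field Cplx_field : Cfield.

Lemma Cpow_add (z : Cplx) (a b : nat) : Cpow z (a + b) = Cmul (Cpow z a) (Cpow z b).
Proof.
  induction b as [|b IH]; cbn.
  - rewrite Nat.add_0_r; ring.
  - rewrite Nat.add_succ_r; cbn; rewrite IH; ring.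
Qed.

Lemma Cmul_cancel_l (c x y : Cplx) : c <> C0 -> Cmul c x = Cmul c y -> x = y.
Proof.
  intros Hc H. replace x with (Cmul (Cinv c) (Cmul c x)) by (field; exact Hc).
  rewrite H; field; exact Hc.
Qed.

Lemma Cnorm_nonneg (z : Cplx) : 0 <= Cnorm z.
Proof. apply sqrt_pos. Qed.

Lemma Cnorm_mul (z w : Cplx) : Cnorm (Cmul z w) = Cnorm z * Cnorm w.
Proof.
  destruct z as [a b], w as [c d]; unfold Cnorm, Cmul; cbn.
  rewrite <- sqrt_mult by nra. f_equal; ring.
Qed.

Lemma Cnorm_add (z w : Cplx) : Cnorm (Cadd z w) <= Cnorm z + Cnorm w.
Proof.
  destruct z as [a b], w as [c d]; unfold Cnorm, Cadd; cbn [Re Im].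
  pose proof (sqrt_cauchy a b c d) as HC; unfold Rsqr in HC.
  replace (a ^ 2 + b ^ 2) with (a * a + b * b) by ring.
  replace (c ^ 2 + d ^ 2) with (c * c + d * d) by ring.
  set (A := sqrt (a * a + b * b)) in *; set (B := sqrt (c * c + d * d)) in *.
  assert (HA : A * A = a * a + b * b) by (apply sqrt_sqrt; nra).
  assert (HB : B * B = c * c + d * d) by (apply sqrt_sqrt; nra).
  assert (0 <= A) by apply sqrt_pos; assert (0 <= B) by apply sqrt_pos.
  rewrite <- (sqrt_square (A + B)) by lra.
  apply sqrt_le_1_alt; nra.
Qed.

Lemma Cnorm_opp (z : Cplx) : Cnorm (Copp z) = Cnorm z.
Proof. destruct z as [a b]; unfold Cnorm, Copp; cbn; f_equal; ring. Qed.

Lemma Cnorm_sub (z w : Cplx) : Cnorm (Csub z w) <= Cnorm z + Cnorm w.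
Proof. unfold Csub; rewrite <- (Cnorm_opp w); apply Cnorm_add. Qed.

Lemma Cnorm_sub_comm (z w : Cplx) : Cnorm (Csub z w) = Cnorm (Csub w z).
Proof. replace (Csub z w) with (Copp (Csub w z)) by ring; apply Cnorm_opp. Qed.

Lemma Cnorm_reverse_triangle (z w : Cplx) : Cnorm z - Cnorm w <= Cnorm (Csub z w).
Proof.
  pose proof (Cnorm_add (Csub z w) w) as H.
  replace (Cadd (Csub z w) w) with z in H by ring; lra.
Qed.

Lemma Cnorm_C0 : Cnorm C0 = 0.
Proof. unfold Cnorm, C0; cbn. replace (0 * (0 * 1) + 0 * (0 * 1)) with 0 by ring; apply sqrt_0. Qed.

Lemma Cnorm_C1 : Cnorm C1 = 1.
Proof. unfold Cnorm, C1; cbn. replace (1 * (1 * 1) + 0 * (0 * 1)) with 1 by ring; apply sqrt_1. Qed.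

Lemma Cnorm_pow (z : Cplx) (n : nat) : Cnorm (Cpow z n) = Cnorm z ^ n.
Proof. induction n as [|n IH]; cbn; [apply Cnorm_C1 | rewrite Cnorm_mul, IH; ring]. Qed.

Lemma Cnorm_eq0 (z : Cplx) : Cnorm z = 0 -> z = C0.
Proof.
  destruct z as [a b]; unfold Cnorm; cbn; intro H.
  apply sqrt_eq_0 in H; [|nra]. unfold C0; apply Cplx_eq; nra.
Qed.

Lemma Cnorm_inv (z : Cplx) : z <> C0 -> Cnorm (Cinv z) = / Cnorm z.
Proof.
  intro Hz. assert (Hn : Cnorm z <> 0) by (intro E; apply Hz, Cnorm_eq0, E).
  assert (H : Cnorm (Cinv z) * Cnorm z = 1) by (rewrite <- Cnorm_mul, Cinv_l, Cnorm_C1; auto).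
  field_simplify_eq; auto.
Qed.

(* The modulus controls, and is controlled by, the real and imaginary parts;
   this reduces completeness of [Cplx] to that of [R]. *)
Lemma Cnorm_Re (z : Cplx) : Rabs (Re z) <= Cnorm z.
Proof.
  destruct z as [a b]; unfold Cnorm; cbn. rewrite <- sqrt_Rsqr_abs.
  apply sqrt_le_1_alt; unfold Rsqr; nra.
Qed.

Lemma Cnorm_Im (z : Cplx) : Rabs (Im z) <= Cnorm z.
Proof.
  destruct z as [a b]; unfold Cnorm; cbn. rewrite <- sqrt_Rsqr_abs.
  apply sqrt_le_1_alt; unfold Rsqr; nra.
Qed.

Lemma Cnorm_le_Re_Im (z : Cplx) : Cnorm z <= Rabs (Re z) + Rabs (Im z).
Proof.
  destruct z as [a b]; unfold Cnorm; cbn [Re Im].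
  pose proof (Rabs_pos a); pose proof (Rabs_pos b).
  assert (Ea : Rabs a * Rabs a = a * a) by (rewrite <- Rabs_mult; apply Rabs_right; nra).
  assert (Eb : Rabs b * Rabs b = b * b) by (rewrite <- Rabs_mult; apply Rabs_right; nra).
  rewrite <- (sqrt_square (Rabs a + Rabs b)) by lra.
  apply sqrt_le_1_alt; nra.
Qed.

Lemma Re_sub (z w : Cplx) : Re (Csub z w) = Re z - Re w.
Proof. unfold Csub, Cadd, Copp; cbn; ring. Qed.

Lemma Im_sub (z w : Cplx) : Im (Csub z w) = Im z - Im w.
Proof. unfold Csub, Cadd, Copp; cbn; ring. Qed.

Lemma Csum_ext (f g : nat -> Cplx) (n : nat) :
  (forall k, (k <= n)%nat -> f k = g k) -> Csum f n = Csum g n.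
Proof.
  induction n as [|n IH]; intro H; cbn; [apply H; lia|].
  rewrite IH by (intros; apply H; lia). rewrite (H (S n)) by lia; reflexivity.
Qed.

Lemma Csum_scal (c : Cplx) (f : nat -> Cplx) (n : nat) :
  Csum (fun k => Cmul c (f k)) n = Cmul c (Csum f n).
Proof. induction n as [|n IH]; cbn; [reflexivity | rewrite IH; ring]. Qed.

Lemma Csum_add (f g : nat -> Cplx) (n : nat) :
  Csum (fun k => Cadd (f k) (g k)) n = Cadd (Csum f n) (Csum g n).
Proof. induction n as [|n IH]; cbn; [reflexivity | rewrite IH; ring]. Qed.

Lemma Csum_sub (f g : nat -> Cplx) (n : nat) :
  Csum (fun k => Csub (f k) (g k)) n = Csub (Csum f n) (Csum g n).
Proof. induction n as [|n IH]; cbn; [reflexivity | rewrite IH; ring]. Qed.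

Lemma Csum_first (f : nat -> Cplx) (n : nat) :
  Csum f (S n) = Cadd (f O) (Csum (fun k => f (S k)) n).
Proof.
  induction n as [|n IH]; [reflexivity|].
  change (Csum f (S (S n))) with (Cadd (Csum f (S n)) (f (S (S n)))).
  rewrite IH; cbn; ring.
Qed.

Lemma Csum_last_zero (f : nat -> Cplx) (n : nat) :
  f (S n) = C0 -> Csum f (S n) = Csum f n.
Proof. intro H; cbn; rewrite H; ring. Qed.

Lemma Csum_drop_zeros (m n : nat) (f : nat -> Cplx) :
  (forall k, (k < m)%nat -> f k = C0) ->
  Csum f (m + n) = Csum (fun r => f (m + r)%nat) n.
Proof.
  revert f; induction m as [|m IH]; intros f H; [reflexivity|].
  change (S m + n)%nat with (S (m + n)). rewrite Csum_first, H by lia.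
  rewrite (IH (fun k => f (S k))) by (intros; apply H; lia). cbn; ring.
Qed.

Lemma Csum_cutoff (L M : nat) (f : nat -> Cplx) :
  (forall k, (L < k)%nat -> f k = C0) -> (L <= M)%nat -> Csum f M = Csum f L.
Proof.
  intros H HM; induction M as [|M IH]; [replace L with O by lia; reflexivity|].
  destruct (Nat.eq_dec L (S M)) as [->|HL]; [reflexivity|].
  rewrite Csum_last_zero by (apply H; lia). apply IH; lia.
Qed.

Lemma Cnorm_Csum (f : nat -> Cplx) (n : nat) :
  Cnorm (Csum f n) <= sum_f_R0 (fun k => Cnorm (f k)) n.
Proof.
  induction n as [|n IH]; cbn; [lra|].
  eapply Rle_trans; [apply Cnorm_add | lra].
Qed.

Ltac prod_nonneg := repeat (apply Rmult_le_pos || apply pow_le); lra.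

Lemma pow_le_antitone (r : R) (m n : nat) : 0 <= r <= 1 -> (m <= n)%nat -> r ^ n <= r ^ m.
Proof.
  intros Hr Hmn. replace n with (m + (n - m))%nat by lia. rewrite pow_add.
  pose proof (pow_le r m (proj1 Hr)); pose proof (pow_le r (n - m) (proj1 Hr)).
  assert (r ^ (n - m) <= 1) by (rewrite <- (pow1 (n - m)); apply pow_incr; lra).
  nra.
Qed.

(* 1 - x >= exp(-x/(1-r)) for 0 <= x <= r < 1: the factors 1 - |q|^m of the
   q-Pochhammer symbol are bounded below by exponentials of a summable sequence. *)
Lemma one_sub_ge_exp (x r : R) : 0 <= x <= r -> r < 1 -> exp (- (x / (1 - r))) <= 1 - x.
Proof.
  intros Hx Hr. set (y := x / (1 - r)).
  assert (Hy : 0 <= y) by (apply Rmult_le_pos; [lra | left; apply Rinv_0_lt_compat; lra]).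
  assert (Hxy : y * (1 - r) = x) by (unfold y; field; lra).
  pose proof (exp_ineq1_le y) as He. pose proof (exp_pos y) as Hp.
  rewrite exp_Ropp. apply Rmult_le_reg_r with (exp y); [exact Hp|].
  rewrite Rinv_l by lra. nra.
Qed.

(* A positive lower bound for |(q)_n| that is uniform in n. *)
Definition qpoch_floor (q : Cplx) : R := exp (- (/ (1 - Cnorm q) * / (1 - Cnorm q))).

Section Pochhammer.

Variable q : Cplx.
Hypothesis hq : Cnorm q < 1.

(* |(q)_n| >= prod_{m=1}^{n} exp(-|q|^m/(1-|q|)) = exp(-(|q| - |q|^(n+1))/(1-|q|)^2). *)
Lemma qpoch_norm_ge_exp (n : nat) :
  exp (- (/ (1 - Cnorm q) * / (1 - Cnorm q) * (Cnorm q - Cnorm q ^ S n))) <= Cnorm (qpoch q n).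
Proof.
  set (r := Cnorm q) in *. set (t := / (1 - r)).
  assert (Hr : 0 <= r) by apply Cnorm_nonneg.
  assert (Ht : t * (1 - r) = 1) by (unfold t; field; lra).
  induction n as [|n IH].
  - cbn; rewrite Cnorm_C1. replace (r - r * 1) with 0 by ring.
    rewrite Rmult_0_r, Ropp_0, exp_0; lra.
  - cbn [qpoch]; rewrite Cnorm_mul.
    assert (Hfactor : 1 - r ^ S n <= Cnorm (Csub C1 (Cpow q (S n)))).
    { pose proof (Cnorm_reverse_triangle C1 (Cpow q (S n))) as H.
      rewrite Cnorm_C1, Cnorm_pow in H; exact H. }
    assert (Hrn : 0 <= r ^ S n <= r).
    { split; [apply pow_le; exact Hr|].
      rewrite <- (pow_1 r) at 2; apply pow_le_antitone; lra || lia. }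
    pose proof (one_sub_ge_exp (r ^ S n) r Hrn hq) as He.
    assert (Hsplit : - (t * t * (r - r ^ S (S n)))
                     = - (t * t * (r - r ^ S n)) + - (r ^ S n / (1 - r))).
    { change (r ^ S (S n)) with (r * r ^ S n). unfold Rdiv; fold t.
      replace (r ^ S n * t) with (t * (1 - r) * (t * r ^ S n)) by (rewrite Ht; ring). ring. }
    rewrite Hsplit, exp_plus.
    apply Rmult_le_compat; try (left; apply exp_pos); lra.
Qed.

(* Dropping the term |q|^(n+1) in the exponent gives the uniform bound. *)
Lemma qpoch_floor_le (n : nat) : qpoch_floor q <= Cnorm (qpoch q n).
Proof.
  eapply Rle_trans; [|apply qpoch_norm_ge_exp]. unfold qpoch_floor.
  set (r := Cnorm q) in *. assert (Hr : 0 <= r) by apply Cnorm_nonneg.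
  set (t := / (1 - r)). assert (0 < t) by (apply Rinv_0_lt_compat; lra).
  assert (0 <= r ^ S n) by (apply pow_le; lra).
  assert (Hle : - (t * t) <= - (t * t * (r - r ^ S n))).
  { apply Ropp_le_contravar. rewrite <- (Rmult_1_r (t * t)) at 2.
    apply Rmult_le_compat_l; nra. }
  destruct Hle as [Hlt | ->]; [left; apply exp_increasing; exact Hlt | right; reflexivity].
Qed.

Lemma qpoch_neq0 (n : nat) : qpoch q n <> C0.
Proof.
  intro E. pose proof (qpoch_floor_le n) as H. rewrite E, Cnorm_C0 in H.
  unfold qpoch_floor in H. pose proof (exp_pos (- (/ (1 - Cnorm q) * / (1 - Cnorm q)))); lra.
Qed.

Definition invqpoch_bound : R := / qpoch_floor q.

Lemma invqpoch_bound_pos : 0 < invqpoch_bound.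
Proof. apply Rinv_0_lt_compat, exp_pos. Qed.

Lemma invqpoch_norm_le (z : Z) : Cnorm (invqpoch q z) <= invqpoch_bound.
Proof.
  unfold invqpoch_bound.
  assert (Hpos : 0 < qpoch_floor q) by apply exp_pos.
  unfold invqpoch; destruct (z <? 0)%Z.
  - rewrite Cnorm_C0; left; apply Rinv_0_lt_compat; exact Hpos.
  - rewrite Cnorm_inv by apply qpoch_neq0.
    apply Rinv_le_contravar; [exact Hpos | apply qpoch_floor_le].
Qed.

End Pochhammer.

Section TerminatingIdentity.

Variable q : Cplx.
Hypothesis hq : Cnorm q < 1.

Lemma invqpoch_neg (z : Z) : (z < 0)%Z -> invqpoch q z = C0.
Proof. intro H; unfold invqpoch; apply Z.ltb_lt in H; rewrite H; reflexivity. Qed.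

Lemma invqpoch_of_nat (n : nat) : invqpoch q (Z.of_nat n) = Cinv (qpoch q n).
Proof.
  unfold invqpoch. replace (Z.of_nat n <? 0)%Z with false by (symmetry; apply Z.ltb_ge; lia).
  rewrite Nat2Z.id; reflexivity.
Qed.

Lemma invqpoch_zero : invqpoch q 0 = C1.
Proof. change (invqpoch q 0) with (Cinv C1); field; exact C1_neq_C0. Qed.

Lemma one_sub_pow_neq0 (n : nat) : Csub C1 (Cpow q (S n)) <> C0.
Proof.
  intro E. assert (H : Cpow q (S n) = C1).
  { replace (Cpow q (S n)) with (Csub C1 (Csub C1 (Cpow q (S n)))) by ring.
    rewrite E; ring. }
  apply (f_equal Cnorm) in H. rewrite Cnorm_pow, Cnorm_C1 in H.
  pose proof (pow_lt_1_compat (Cnorm q) (S n) (conj (Cnorm_nonneg q) hq) ltac:(lia)); lra.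
Qed.

(* (1 - q^x) / (q)_x = 1 / (q)_(x-1), including x = 0 where both sides vanish. *)
Lemma invqpoch_step (x : nat) :
  Cmul (invqpoch q (Z.of_nat x)) (Csub C1 (Cpow q x)) = invqpoch q (Z.of_nat x - 1).
Proof.
  destruct x as [|x].
  - rewrite (invqpoch_neg (Z.of_nat 0 - 1)) by lia; cbn; ring.
  - replace (Z.of_nat (S x) - 1)%Z with (Z.of_nat x) by lia.
    rewrite !invqpoch_of_nat. cbn [qpoch]; change (Cmul (Cpow q x) q) with (Cpow q (S x)).
    pose proof (qpoch_neq0 q hq x); pose proof (one_sub_pow_neq0 x).
    field; split; assumption.
Qed.

Lemma invqpoch_pascal (x y : nat) :
  Cmul (Cmul (invqpoch q (Z.of_nat x)) (invqpoch q (Z.of_nat y))) (Csub C1 (Cpow q (x + y))) =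
  Cadd (Cmul (Cpow q y) (Cmul (invqpoch q (Z.of_nat x - 1)) (invqpoch q (Z.of_nat y))))
       (Cmul (invqpoch q (Z.of_nat x)) (invqpoch q (Z.of_nat y - 1))).
Proof. rewrite <- (invqpoch_step x), <- (invqpoch_step y), Cpow_add; ring. Qed.

Definition terminating_term (L a r : nat) : Cplx :=
  Cmul (Cpow q (r * r + a * r))
    (Cmul (invqpoch q (Z.of_nat r))
      (Cmul (invqpoch q (Z.of_nat L - Z.of_nat r)) (invqpoch q (Z.of_nat (a + r))))).

Lemma terminating_term_beyond (L a r : nat) : (L < r)%nat -> terminating_term L a r = C0.
Proof.
  intro H; unfold terminating_term.
  rewrite (invqpoch_neg (Z.of_nat L - Z.of_nat r)) by lia; ring.
Qed.

(* The part of (1 - q^(L+1)) * terminating_term (L+1) a r that is not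
   terminating_term L a r: q^(L+1+a) times the summand for L, a+1 at index r-1. *)
Definition terminating_raise (L a r : nat) : Cplx :=
  match r with
  | O => C0
  | S s => Cmul (Cpow q (S L + a)) (terminating_term L (S a) s)
  end.

(* The q-Pascal recurrence at x = r, y = L+1-r, term by term. *)
Lemma terminating_term_recurrence (L a r : nat) : (r <= S L)%nat ->
  Cmul (Csub C1 (Cpow q (S L))) (terminating_term (S L) a r) =
  Cadd (terminating_raise L a r) (terminating_term L a r).
Proof.
  intro Hr; destruct r as [|s]; cbn [terminating_raise]; unfold terminating_term.
  - pose proof (invqpoch_step (S L)) as Hstep.
    replace (Z.of_nat (S L) - 1)%Z with (Z.of_nat L) in Hstep by lia.
    replace (Z.of_nat (S L) - Z.of_nat 0)%Z with (Z.of_nat (S L)) by lia.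
    replace (Z.of_nat L - Z.of_nat 0)%Z with (Z.of_nat L) by lia.
    rewrite <- Hstep; ring.
  - pose proof (invqpoch_pascal (S s) (L - s)) as HP.
    replace (S s + (L - s))%nat with (S L) in HP by lia.
    replace (Z.of_nat (S s) - 1)%Z with (Z.of_nat s) in HP by lia.
    replace (Z.of_nat (S L) - Z.of_nat (S s))%Z with (Z.of_nat (L - s)) by lia.
    replace (Z.of_nat L - Z.of_nat (S s))%Z with (Z.of_nat (L - s) - 1)%Z by lia.
    replace (Z.of_nat L - Z.of_nat s)%Z with (Z.of_nat (L - s)) by lia.
    replace (a + S s)%nat with (S a + s)%nat by lia.
    assert (Hexp : forall X, Cmul (Cpow q (S L + a)) (Cmul (Cpow q (s * s + S a * s)) X)
                   = Cmul (Cmul (Cpow q (S s * S s + a * S s)) (Cpow q (L - s))) X).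
    { intro X.
      transitivity (Cmul (Cmul (Cpow q (S L + a)) (Cpow q (s * s + S a * s))) X); [ring|].
      rewrite <- !Cpow_add.
      replace (S L + a + (s * s + S a * s))%nat with (S s * S s + a * S s + (L - s))%nat
        by nia; reflexivity. }
    transitivity (Cmul (Cpow q (S s * S s + a * S s))
      (Cmul (Cmul (Cmul (invqpoch q (Z.of_nat (S s))) (invqpoch q (Z.of_nat (L - s))))
                  (Csub C1 (Cpow q (S L))))
            (invqpoch q (Z.of_nat (S a + s))))); [ring|].
    rewrite HP, Hexp; ring.
Qed.

(* The terminating identity
   sum_{r=0}^{L} q^(r^2 + a r) / ((q)_r (q)_(L-r) (q)_(a+r)) = 1 / ((q)_L (q)_(L+a)),
   by induction on L (for all a at once), multiplying by 1 - q^(L+1). *)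
Lemma terminating_sum (L a : nat) :
  Csum (terminating_term L a) L =
  Cmul (invqpoch q (Z.of_nat L)) (invqpoch q (Z.of_nat (L + a))).
Proof.
  revert a; induction L as [|L IH]; intro a.
  - cbn [Csum]; unfold terminating_term.
    replace (Z.of_nat 0 - Z.of_nat 0)%Z with 0%Z by lia.
    replace (0 * 0 + a * 0)%nat with 0%nat by lia. rewrite Nat.add_0_r.
    change (Z.of_nat 0) with 0%Z; rewrite invqpoch_zero, Nat.add_0_l; cbn [Cpow]; ring.
  - apply (Cmul_cancel_l (Csub C1 (Cpow q (S L)))); [apply one_sub_pow_neq0|].
    rewrite <- Csum_scal.
    rewrite (Csum_ext _ (fun r => Cadd (terminating_raise L a r) (terminating_term L a r)))
      by (intros; apply terminating_term_recurrence; assumption).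
    rewrite Csum_add, Csum_first.
    change (Csum (fun k => terminating_raise L a (S k)) L)
      with (Csum (fun s => Cmul (Cpow q (S L + a)) (terminating_term L (S a) s)) L).
    rewrite Csum_scal, (Csum_last_zero (terminating_term L a))
      by (apply terminating_term_beyond; lia).
    rewrite !IH.
    pose proof (invqpoch_step (S L)) as H1.
    replace (Z.of_nat (S L) - 1)%Z with (Z.of_nat L) in H1 by lia.
    pose proof (invqpoch_step (S L + a)) as H2.
    replace (Z.of_nat (S L + a) - 1)%Z with (Z.of_nat (L + a)) in H2 by lia.
    replace (Z.of_nat (L + S a)) with (Z.of_nat (S L + a)) by lia.
    rewrite <- H1, <- H2; cbn [terminating_raise]; ring.
Qed.

End TerminatingIdentity.

(* For j <= i the k-sum of the left summand terminates (at k = i + j) and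
   equals the (i,j) summand of the right-hand side: shifting k = (i - j) + r
   turns it into the terminating identity with L = 2j and a = 2(i - j). *)
Lemma lhs_inner_sum_ordered (q : Cplx) (i j M : nat) : Cnorm q < 1 ->
  (j <= i)%nat -> (i + j <= M)%nat ->
  Csum (lhs_term q i j) M = rhs_term q i j.
Proof.
  intros hq Hji HM.
  set (m := (i - j)%nat).
  rewrite (Csum_cutoff (m + 2 * j) M).
  2:{ intros k Hk; unfold lhs_term.
      rewrite (invqpoch_neg q (Z.of_nat i + Z.of_nat j - Z.of_nat k)) by lia; ring. }
  2:{ lia. }
  rewrite Csum_drop_zeros.
  2:{ intros k Hk; unfold lhs_term.
      rewrite (invqpoch_neg q (Z.of_nat j + Z.of_nat k - Z.of_nat i)) by lia; ring. }
  rewrite (Csum_ext _ (fun r => Cmul (Cpow q (i * i + j * j + m * m))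
                                     (terminating_term q (2 * j) (2 * m) r))).
  2:{ intros r Hr; unfold lhs_term, terminating_term.
      replace (Z.of_nat i + Z.of_nat j - Z.of_nat (m + r))%Z
        with (Z.of_nat (2 * j) - Z.of_nat r)%Z by lia.
      replace (Z.of_nat i + Z.of_nat (m + r) - Z.of_nat j)%Z
        with (Z.of_nat (2 * m + r)) by lia.
      replace (Z.of_nat j + Z.of_nat (m + r) - Z.of_nat i)%Z with (Z.of_nat r) by lia.
      replace (i * i + j * j + (m + r) * (m + r))%nat
        with ((i * i + j * j + m * m) + (r * r + 2 * m * r))%nat by nia.
      rewrite Cpow_add; ring. }
  rewrite Csum_scal, terminating_sum by exact hq.
  unfold rhs_term.
  replace (Z.of_nat i - Z.of_nat j)%Z with (Z.of_nat m) by lia.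
  rewrite Zabs2Nat.id. replace (m ^ 2)%nat with (m * m)%nat by (cbn; lia).
  replace (Z.of_nat (2 * j + 2 * m)) with (Z.of_nat (2 * i)) by lia.
  ring.
Qed.

(* Both summands are symmetric in i and j, so the restriction j <= i is harmless. *)
Lemma lhs_inner_sum (q : Cplx) (i j M : nat) : Cnorm q < 1 -> (i + j <= M)%nat ->
  Csum (lhs_term q i j) M = rhs_term q i j.
Proof.
  intros hq HM. destruct (Nat.le_ge_cases j i) as [Hji | Hij].
  - apply lhs_inner_sum_ordered; assumption.
  - assert (Hlhs : forall k, lhs_term q i j k = lhs_term q j i k).
    { intro k; unfold lhs_term.
      replace (Z.of_nat i + Z.of_nat j - Z.of_nat k)%Z
        with (Z.of_nat j + Z.of_nat i - Z.of_nat k)%Z by lia.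
      replace (i * i + j * j + k * k)%nat with (j * j + i * i + k * k)%nat by lia; ring. }
    assert (Hrhs : rhs_term q i j = rhs_term q j i).
    { unfold rhs_term.
      replace (Z.abs_nat (Z.of_nat i - Z.of_nat j)) with (Z.abs_nat (Z.of_nat j - Z.of_nat i)) by lia.
      replace (i * i + j * j)%nat with (j * j + i * i)%nat by lia; ring. }
    rewrite Hrhs, (Csum_ext _ (lhs_term q j i)) by (intros; apply Hlhs).
    apply lhs_inner_sum_ordered; lia || assumption.
Qed.

Lemma geometric_sum_le (r A : R) (f : nat -> R) (N : nat) : 0 <= r < 1 -> 0 <= A ->
  (forall k, (k <= N)%nat -> f k <= A * r ^ k) -> sum_f_R0 f N <= A * / (1 - r).
Proof.
  intros Hr HA H. set (t := / (1 - r)).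
  assert (Ht : t * (1 - r) = 1) by (unfold t; field; lra).
  assert (0 < t) by (unfold t; apply Rinv_0_lt_compat; lra).
  assert (Hpartial : forall n, (n <= N)%nat -> sum_f_R0 f n <= A * t * (1 - r ^ S n)).
  { induction n as [|n IH]; intro Hn; cbn.
    - specialize (H O Hn); cbn in H.
      replace (A * t * (1 - r * 1)) with (A * (t * (1 - r))) by ring; rewrite Ht; lra.
    - specialize (IH ltac:(lia)); specialize (H (S n) Hn); cbn in IH, H.
      replace (A * t * (1 - r * (r * r ^ n)))
        with (A * t * (1 - r * r ^ n) + A * (t * (1 - r)) * (r * r ^ n)) by ring.
      rewrite Ht; lra. }
  specialize (Hpartial N (le_n N)). assert (0 <= r ^ S N) by (apply pow_le; lra).
  assert (0 <= A * t) by nra. nra.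
Qed.

Lemma geometric_tail_le (r A : R) (f : nat -> Cplx) (N M : nat) : 0 <= r < 1 -> 0 <= A ->
  (forall k, Cnorm (f k) <= A * r ^ k) -> (N <= M)%nat ->
  Cnorm (Csub (Csum f M) (Csum f N)) <= A * / (1 - r) * r ^ S N.
Proof.
  intros Hr HA H HNM. set (t := / (1 - r)).
  assert (Ht : t * (1 - r) = 1) by (unfold t; field; lra).
  assert (0 < t) by (unfold t; apply Rinv_0_lt_compat; lra).
  assert (Hincr : forall d, Cnorm (Csub (Csum f (N + d)) (Csum f N))
                            <= A * t * (r ^ S N - r ^ S (N + d))).
  { induction d as [|d IH].
    - rewrite Nat.add_0_r. replace (Csub (Csum f N) (Csum f N)) with C0 by ring.
      rewrite Cnorm_C0; lra.
    - rewrite Nat.add_succ_r; cbn [Csum].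
      replace (Csub (Cadd (Csum f (N + d)) (f (S (N + d)))) (Csum f N))
        with (Cadd (Csub (Csum f (N + d)) (Csum f N)) (f (S (N + d)))) by ring.
      eapply Rle_trans; [apply Cnorm_add|].
      specialize (H (S (N + d))).
      replace (A * t * (r ^ S N - r ^ S (S (N + d))))
        with (A * t * (r ^ S N - r ^ S (N + d)) + A * (t * (1 - r)) * r ^ S (N + d))
        by (cbn; ring).
      rewrite Ht; lra. }
  replace M with (N + (M - N))%nat by lia.
  eapply Rle_trans; [apply Hincr|].
  assert (0 <= r ^ S (N + (M - N))) by (apply pow_le; lra). assert (0 <= A * t) by nra. nra.
Qed.

Lemma geometric_eventually_small (r B eps : R) : 0 <= r < 1 -> 0 <= B -> 0 < eps ->
  exists N, forall n, (n >= N)%nat -> B * r ^ n < eps.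
Proof.
  intros Hr HB He.
  assert (Hr' : Rabs r < 1) by (rewrite Rabs_right; lra).
  destruct (pow_lt_1_zero r Hr' (eps / (B + 1))) as [N HN]; [apply Rdiv_pos_pos; lra|].
  exists N; intros n Hn. specialize (HN n Hn).
  rewrite Rabs_right in HN by (apply Rle_ge, pow_le; lra).
  assert (0 <= r ^ n) by (apply pow_le; lra).
  apply Rle_lt_trans with ((B + 1) * r ^ n); [nra|].
  replace eps with ((B + 1) * (eps / (B + 1))) by (field; lra).
  apply Rmult_lt_compat_l; lra.
Qed.

Lemma Ccv_of_geometric_increments (u : nat -> Cplx) (r B : R) : 0 <= r < 1 -> 0 <= B ->
  (forall N n, (N <= n)%nat -> Cnorm (Csub (u n) (u N)) <= B * r ^ S N) ->
  exists L, Ccv u L.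
Proof.
  intros Hr HB H.
  assert (Hcauchy : forall eps, 0 < eps -> exists N, forall n m, (n >= N)%nat -> (m >= N)%nat ->
                      Cnorm (Csub (u n) (u m)) < eps).
  { intros eps He. destruct (geometric_eventually_small r (2 * B) eps Hr ltac:(lra) He) as [N HN].
    exists N; intros n m Hn Hm.
    replace (Csub (u n) (u m)) with (Csub (Csub (u n) (u N)) (Csub (u m) (u N))) by ring.
    eapply Rle_lt_trans; [apply Cnorm_sub|].
    pose proof (H N n Hn); pose proof (H N m Hm); specialize (HN (S N) ltac:(lia)); lra. }
  assert (CRe : Cauchy_crit (fun n => Re (u n))).
  { intros eps He. destruct (Hcauchy eps He) as [N HN]. exists N; intros n m Hn Hm.
    unfold R_dist; rewrite <- Re_sub. eapply Rle_lt_trans; [apply Cnorm_Re | auto]. }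
  assert (CIm : Cauchy_crit (fun n => Im (u n))).
  { intros eps He. destruct (Hcauchy eps He) as [N HN]. exists N; intros n m Hn Hm.
    unfold R_dist; rewrite <- Im_sub. eapply Rle_lt_trans; [apply Cnorm_Im | auto]. }
  destruct (R_complete _ CRe) as [lr Hlr], (R_complete _ CIm) as [li Hli].
  exists (mkC lr li); intros eps He.
  destruct (Hlr (eps / 2) ltac:(lra)) as [N1 HN1], (Hli (eps / 2) ltac:(lra)) as [N2 HN2].
  exists (max N1 N2); intros n Hn.
  eapply Rle_lt_trans; [apply Cnorm_le_Re_Im|]. rewrite Re_sub, Im_sub; cbn.
  specialize (HN1 n ltac:(lia)); specialize (HN2 n ltac:(lia)); unfold R_dist in *; lra.
Qed.

Lemma Ccv_of_geometric_gap (u v : nat -> Cplx) (L : Cplx) (r B : R) : 0 <= r < 1 -> 0 <= B ->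
  Ccv v L -> (forall n, Cnorm (Csub (u n) (v n)) <= B * r ^ S n) -> Ccv u L.
Proof.
  intros Hr HB Hv H eps He.
  destruct (Hv (eps / 2) ltac:(lra)) as [N1 HN1].
  destruct (geometric_eventually_small r B (eps / 2) Hr HB ltac:(lra)) as [N2 HN2].
  exists (max N1 N2); intros n Hn.
  replace (Csub (u n) L) with (Cadd (Csub (u n) (v n)) (Csub (v n) L)) by ring.
  eapply Rle_lt_trans; [apply Cnorm_add|].
  specialize (HN1 n ltac:(lia)); specialize (HN2 (S n) ltac:(lia)); specialize (H n); lra.
Qed.

Definition box_sum (g : nat -> nat -> Cplx) (N : nat) : Cplx :=
  Csum (fun i => Csum (fun j => g i j) N) N.

Lemma Cnorm_box_sum (g : nat -> nat -> Cplx) (N : nat) :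
  Cnorm (box_sum g N) <= sum_f_R0 (fun i => sum_f_R0 (fun j => Cnorm (g i j)) N) N.
Proof.
  eapply Rle_trans; [apply Cnorm_Csum|].
  apply sum_Rle; intros i _; apply Cnorm_Csum.
Qed.

Lemma geometric_sum2_le (r A : R) (f : nat -> nat -> R) (N : nat) : 0 <= r < 1 -> 0 <= A ->
  (forall i j, (i <= N)%nat -> (j <= N)%nat -> f i j <= A * r ^ (i + j)) ->
  sum_f_R0 (fun i => sum_f_R0 (fun j => f i j) N) N <= A * / (1 - r) * / (1 - r).
Proof.
  intros Hr HA H. assert (0 < / (1 - r)) by (apply Rinv_0_lt_compat; lra).
  apply geometric_sum_le; [exact Hr | prod_nonneg |]. intros i Hi.
  replace (A * / (1 - r) * r ^ i) with ((A * r ^ i) * / (1 - r)) by ring.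
  apply geometric_sum_le; [exact Hr | prod_nonneg |].
  intros j Hj. rewrite Rmult_assoc, <- pow_add. apply H; assumption.
Qed.

Lemma box_sum_increment_le (g : nat -> nat -> Cplx) (r A : R) (N n : nat) :
  0 <= r < 1 -> 0 <= A -> (forall i j, Cnorm (g i j) <= A * r ^ (i + j)) -> (N <= n)%nat ->
  Cnorm (Csub (box_sum g n) (box_sum g N)) <= 2 * (A * / (1 - r) * / (1 - r)) * r ^ S N.
Proof.
  intros Hr HA Hg HNn. set (t := / (1 - r)). assert (Ht : 0 < t) by (apply Rinv_0_lt_compat; lra).
  set (row := fun X i => Csum (fun j => g i j) X).
  assert (Hrow : forall X i, Cnorm (row X i) <= A * t * r ^ i).
  { intros X i. eapply Rle_trans; [apply Cnorm_Csum|].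
    replace (A * t * r ^ i) with ((A * r ^ i) * t) by ring.
    apply geometric_sum_le; [exact Hr | prod_nonneg |].
    intros j _; rewrite Rmult_assoc, <- pow_add; apply Hg. }
  change (box_sum g n) with (Csum (row n) n); change (box_sum g N) with (Csum (row N) N).
  replace (Csub (Csum (row n) n) (Csum (row N) N))
    with (Cadd (Csum (fun i => Csub (row n i) (row N i)) n) (Csub (Csum (row N) n) (Csum (row N) N)))
    by (rewrite Csum_sub; ring).
  eapply Rle_trans; [apply Cnorm_add|].
  assert (Hnew_columns : Cnorm (Csum (fun i => Csub (row n i) (row N i)) n) <= A * t * t * r ^ S N).
  { eapply Rle_trans; [apply Cnorm_Csum|].
    replace (A * t * t * r ^ S N) with ((A * t * r ^ S N) * t) by ring.
    apply geometric_sum_le; [exact Hr | prod_nonneg |]. intros i _.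
    replace (A * t * r ^ S N * r ^ i) with ((A * r ^ i) * t * r ^ S N) by ring.
    apply geometric_tail_le; [exact Hr | prod_nonneg | | exact HNn].
    intros j; rewrite Rmult_assoc, <- pow_add; apply Hg. }
  assert (Hnew_rows : Cnorm (Csub (Csum (row N) n) (Csum (row N) N)) <= A * t * t * r ^ S N).
  { apply geometric_tail_le; [exact Hr | prod_nonneg | apply Hrow | exact HNn]. }
  lra.
Qed.

Lemma box_sum_converges (g : nat -> nat -> Cplx) (r A : R) : 0 <= r < 1 -> 0 <= A ->
  (forall i j, Cnorm (g i j) <= A * r ^ (i + j)) -> exists L, Ccv (box_sum g) L.
Proof.
  intros Hr HA Hg. assert (0 < / (1 - r)) by (apply Rinv_0_lt_compat; lra).
  apply (Ccv_of_geometric_increments _ r (2 * (A * / (1 - r) * / (1 - r)))); [exact Hr | prod_nonneg |].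
  intros N n HNn; apply box_sum_increment_le; assumption.
Qed.

(* Both summands are dominated by geometric series: every reciprocal
   Pochhammer symbol is at most K = invqpoch_bound q in modulus, and the
   quadratic exponents dominate the linear ones. *)
Lemma lhs_term_le (q : Cplx) (i j k : nat) : Cnorm q < 1 ->
  Cnorm (lhs_term q i j k) <= invqpoch_bound q ^ 3 * Cnorm q ^ (i + j + k).
Proof.
  intro hq. unfold lhs_term; rewrite !Cnorm_mul, Cnorm_pow.
  set (K := invqpoch_bound q). set (r := Cnorm q).
  assert (Hr : 0 <= r <= 1) by (split; [apply Cnorm_nonneg | unfold r; lra]).
  assert (Hinv : forall z, 0 <= Cnorm (invqpoch q z) <= K)
    by (intro z; split; [apply Cnorm_nonneg | apply invqpoch_norm_le; exact hq]).
  destruct (Hinv (Z.of_nat i + Z.of_nat j - Z.of_nat k)%Z) as [Ha0 Ha].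
  destruct (Hinv (Z.of_nat i + Z.of_nat k - Z.of_nat j)%Z) as [Hb0 Hb].
  destruct (Hinv (Z.of_nat j + Z.of_nat k - Z.of_nat i)%Z) as [Hc0 Hc].
  assert (Hsq : forall n : nat, (n <= n * n)%nat) by (intro n; nia).
  assert (Hexp : r ^ (i * i + j * j + k * k) <= r ^ (i + j + k))
    by (apply pow_le_antitone; [exact Hr | pose proof (Hsq i); pose proof (Hsq j); pose proof (Hsq k); lia]).
  rewrite (Rmult_comm (K ^ 3)); replace (K ^ 3) with (K * (K * K)) by ring.
  apply Rmult_le_compat; [apply pow_le, Hr | | exact Hexp |].
  - apply Rmult_le_pos; [| apply Rmult_le_pos]; assumption.
  - apply Rmult_le_compat; [| apply Rmult_le_pos | | apply Rmult_le_compat]; assumption.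
Qed.

Lemma rhs_term_le (q : Cplx) (i j : nat) : Cnorm q < 1 ->
  Cnorm (rhs_term q i j) <= invqpoch_bound q ^ 2 * Cnorm q ^ (i + j).
Proof.
  intro hq. unfold rhs_term; rewrite !Cnorm_mul, Cnorm_pow.
  set (K := invqpoch_bound q). set (r := Cnorm q).
  assert (Hr : 0 <= r <= 1) by (split; [apply Cnorm_nonneg | unfold r; lra]).
  assert (Hinv : forall z, 0 <= Cnorm (invqpoch q z) <= K)
    by (intro z; split; [apply Cnorm_nonneg | apply invqpoch_norm_le; exact hq]).
  destruct (Hinv (Z.of_nat (2 * i))) as [Ha0 Ha], (Hinv (Z.of_nat (2 * j))) as [Hb0 Hb].
  assert (Hsq : forall n : nat, (n <= n * n)%nat) by (intro n; nia).
  assert (Hexp : r ^ (i * i + j * j + Z.abs_nat (Z.of_nat i - Z.of_nat j) ^ 2) <= r ^ (i + j))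
    by (apply pow_le_antitone; [exact Hr | pose proof (Hsq i); pose proof (Hsq j); lia]).
  rewrite (Rmult_comm (K ^ 2)); replace (K ^ 2) with (K * K) by ring.
  apply Rmult_le_compat; [apply pow_le, Hr | apply Rmult_le_pos; assumption | exact Hexp |].
  apply Rmult_le_compat; assumption.
Qed.

(* The two square partial sums at level N differ by O(|q|^N): by the inner
   identity the (i,j) summand of the right-hand side is the k-sum of the left
   summand up to 2N, so the difference consists of the geometric tails k > N. *)
Lemma partial_sums_gap (q : Cplx) (N : nat) : Cnorm q < 1 ->
  Cnorm (Csub (lhs_partial q N) (rhs_partial q N))
  <= invqpoch_bound q ^ 3 * / (1 - Cnorm q) * / (1 - Cnorm q) * / (1 - Cnorm q)
     * Cnorm q ^ S N.
Proof.
  intro hq. set (K := invqpoch_bound q) in *. set (r := Cnorm q) in *. set (t := / (1 - r)).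
  assert (Hr : 0 <= r < 1) by (split; [apply Cnorm_nonneg | exact hq]).
  assert (HK : 0 < K) by (apply invqpoch_bound_pos).
  assert (Ht : 0 < t) by (apply Rinv_0_lt_compat; lra).
  assert (HA : 0 <= K ^ 3 * t * r ^ S N) by prod_nonneg.
  replace (Csub (lhs_partial q N) (rhs_partial q N))
    with (box_sum (fun i j => Csub (Csum (lhs_term q i j) N) (rhs_term q i j)) N).
  2:{ unfold box_sum, lhs_partial, rhs_partial; rewrite <- Csum_sub.
      apply Csum_ext; intros; rewrite <- Csum_sub; reflexivity. }
  eapply Rle_trans; [apply Cnorm_box_sum|].
  replace (K ^ 3 * t * t * t * r ^ S N) with ((K ^ 3 * t * r ^ S N) * t * t) by ring.
  apply geometric_sum2_le; [exact Hr | exact HA |]. intros i j Hi Hj.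
  rewrite <- (lhs_inner_sum q i j (N + N)) by (exact hq || lia).
  rewrite Cnorm_sub_comm.
  replace (K ^ 3 * t * r ^ S N * r ^ (i + j)) with ((K ^ 3 * r ^ (i + j)) * t * r ^ S N) by ring.
  apply geometric_tail_le; [exact Hr | | | lia].
  - prod_nonneg.
  - intro k; rewrite Rmult_assoc, <- pow_add; apply lhs_term_le; exact hq.
Qed.

Theorem mainTheorem16 (q : Cplx) (hq : Cnorm q < 1) :
  (exists B : R, forall N : nat, lhs_abs_partial q N <= B) /\
  (exists B : R, forall N : nat, rhs_abs_partial q N <= B) /\
  (exists L : Cplx, Ccv (lhs_partial q) L /\ Ccv (rhs_partial q) L).
Proof.
  set (K := invqpoch_bound q). set (r := Cnorm q). set (t := / (1 - r)).
  assert (Hr : 0 <= r < 1) by (split; [apply Cnorm_nonneg | exact hq]).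
  assert (HK : 0 < K) by (apply invqpoch_bound_pos).
  assert (Ht : 0 < t) by (apply Rinv_0_lt_compat; lra).
  assert (HK2 : 0 <= K ^ 2) by prod_nonneg.
  split; [|split].
  -
    exists (K ^ 3 * t * t * t); intro N; unfold lhs_abs_partial.
    apply geometric_sum2_le; [exact Hr | prod_nonneg |]. intros i j _ _.
    replace (K ^ 3 * t * r ^ (i + j)) with ((K ^ 3 * r ^ (i + j)) * t) by ring.
    apply geometric_sum_le; [exact Hr | prod_nonneg |].
    intros k _; rewrite Rmult_assoc, <- pow_add; apply lhs_term_le; exact hq.
  - exists (K ^ 2 * t * t); intro N; unfold rhs_abs_partial.
    apply geometric_sum2_le; [exact Hr | exact HK2 |].
    intros i j _ _; apply rhs_term_le; exact hq.
  - destruct (box_sum_converges (rhs_term q) r (K ^ 2) Hr HK2) as [L HL].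
    { intros i j; apply rhs_term_le; exact hq. }
    exists L; split; [|exact HL].
    apply (Ccv_of_geometric_gap _ (rhs_partial q) L r (K ^ 3 * t * t * t) Hr);
      [prod_nonneg | exact HL |].
    intro N; apply partial_sums_gap; exact hq.
Qed.
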